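(* Let $b\ge1$ and suppose that for some vector $v_{b-1}\in\mathbb{R}^{2^{b-1}}$ and some real sequence $a(j)$, $j=0,\dots,b-1$, the identity $$v_{b-1}'\,\Omega_{b-1}\,u_{b-1}=\frac{1}{2^{b-1}}\sum_{j=0}^{b-1}\binom{b-1}{j}a(j)x_j$$ holds (as polynomials in the variables $x_0,x_1,\dots$). Then $$(u_1\otimes v_{b-1})'\,\Omega_b\,u_b=\frac1{2^b}\sum_{j=0}^b\binom bj a_u(j)x_j,\qquad a_u(j)=\frac{b-j}{b}a(j)+\frac jb a(j-1),$$ and $$(w_1\otimes v_{b-1})'\,\Omega_b\,u_b=\frac1{2^b}\sum_{j=0}^b\binom bj a_w(j)x_j,\qquad a_w(j)=\frac{b-j}{b}a(j)-\frac jb a(j-1),$$ where the undefined values $a(-1)$ and $a(b)$ appear only with zero coefficients.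
   Context: Let $T=\frac1{\sqrt2}\begin{pmatrix}1&1\\-1&1\end{pmatrix}$, $e_0=(1,0)'$, $e_1=(0,1)'$, $u_1=Te_0=\frac1{\sqrt2}(1,-1)'$, $w_1=Te_1=\frac1{\sqrt2}(1,1)'$, and $u_t=u_1^{\otimes t}=(\otimes^tT)e_0^{\otimes t}$ ($u_0=1$). The vectors $\mathbf{a}_t$ of length $2^t$ are defined by $\mathbf{a}_1=(0,1)$ and $\mathbf{a}_t=(\mathbf{a}_{t-1},\mathbf{a}_{t-1}+\mathbf{1})$ (adding $1$ to each entry); $a_k$ is the $k$-th entry of $\mathbf{a}_t$ for any $t$ with $2^t\ge k$. With formal variables $x_0,x_1,\dots$, let $\Omega_{t,j}=\mathrm{diag}(x_{a_1+j},\dots,x_{a_{2^t}+j})$ and $\Omega_t=\Omega_{t,0}$ ($\Omega_0=x_0$). *)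

From mathcomp Require Import all_boot all_order all_algebra.
Set Implicit Arguments. Unset Strict Implicit. Unset Printing Implicit Defensive.
Import Order.TTheory GRing.Theory Num.Theory.
Local Open Scope ring_scope.

(* The index vectors a_t : a_0 = (0), a_t = (a_{t-1}, a_{t-1} + 1)
   (so a_1 = (0,1) as in the paper); entries stored 0-based. *)
Fixpoint avec (t : nat) : seq nat :=
  match t with
  | 0 => [:: 0%N]
  | t'.+1 => avec t' ++ map S (avec t')
  end.

Lemma kron_divP m n (i : 'I_(m * n)) : (i %/ n < m)%N.
Proof.
case: n i => [|n] i; first by case: i => i; rewrite muln0.
by rewrite ltn_divLR // ltn_ord.
Qed.

Lemma kron_modP m n (i : 'I_(m * n)) : (i %% n < n)%N.
Proof.
case: n i => [|n] i; first by case: i => i; rewrite muln0.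
by rewrite ltn_mod.
Qed.

Section Defs.
Variable R : rcfType.

Definition Omega (t : nat) (x : nat -> R) : 'M[R]_(2 ^ t) :=
  diag_mx (\row_(i < 2 ^ t) x (nth 0%N (avec t) i)).

(* Kronecker product of column vectors: (A ⊗ B)_(i*n + j) = A_i B_j *)
Definition kron m n (A : 'cV[R]_m) (B : 'cV[R]_n) : 'cV[R]_(m * n) :=
  \col_(i < m * n) (A (Ordinal (kron_divP i)) 0 * B (Ordinal (kron_modP i)) 0).

Definition Tmx : 'M[R]_2 :=
  (Num.sqrt 2)^-1 *: \matrix_(i < 2, j < 2)
     (if (i == 0) && (j == 0) then 1
      else if (i == 0) then 1
      else if (j == 0) then -1 else 1).

Definition e0 : 'cV[R]_2 := \col_(i < 2) (if i == 0 then 1 else 0).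
Definition e1 : 'cV[R]_2 := \col_(i < 2) (if i == 0 then 0 else 1).

Definition u1 : 'cV[R]_2 := Tmx *m e0.
Definition w1 : 'cV[R]_2 := Tmx *m e1.

Definition kron2 t (A : 'cV[R]_2) (v : 'cV[R]_(2 ^ t)) : 'cV[R]_(2 ^ t.+1) :=
  castmx (esym (expnS 2 t), erefl) (kron A v).

Fixpoint ut (t : nat) : 'cV[R]_(2 ^ t) :=
  match t with
  | 0 => const_mx 1
  | t'.+1 => kron2 u1 (ut t')
  end.

End Defs.

(* Since a_{t+1} = (a_t, a_t + 1), Omega_{n+1}(x) = diag(Omega_n(x), Omega_n(x_{.+1})),
   and u_{n+1} = u_1 ⊗ u_n; so (c ⊗ v)' Omega_{n+1} u_{n+1} equals c_0 (u_1)_0 times the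
   hypothesis at x plus c_1 (u_1)_1 times the hypothesis at the shifted variables.
   For c = u_1 resp. w_1 these weights are 1/2, 1/2 resp. 1/2, -1/2, and the identities
   C(b,j) (b-j)/b = C(b-1,j), C(b,j) j/b = C(b-1,j-1) turn the claimed right-hand sides
   into the same combinations of the two sums. *)

From mathcomp Require Import all_boot all_order all_algebra.
From mathcomp Require Import ring.
Import Order.TTheory GRing.Theory Num.Theory.
Local Open Scope ring_scope.

Lemma diag_mx_formE (R : pzRingType) m (A B : 'cV[R]_m) (d : 'rV[R]_m) :
  (A^T *m diag_mx d *m B) 0 0 = \sum_i A i 0 * d 0 i * B i 0.
Proof. by rewrite mul_mx_diag mxE; apply: eq_bigr => i _; rewrite !mxE. Qed.

Lemma size_avec t : size (avec t) = (2 ^ t)%N.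
Proof. by elim: t => //= t IH; rewrite size_cat size_map IH expnS mul2n addnn. Qed.

Lemma nth_avec_lo t i : (i < 2 ^ t)%N ->
  nth 0%N (avec t.+1) i = nth 0%N (avec t) i.
Proof. by move=> lt_i; rewrite /= nth_cat size_avec lt_i. Qed.

Lemma nth_avec_hi t i : (i < 2 ^ t)%N ->
  nth 0%N (avec t.+1) (2 ^ t + i) = (nth 0%N (avec t) i).+1.
Proof.
move=> lt_i; rewrite /= nth_cat size_avec ltnNge leq_addr /= addKn.
by rewrite (nth_map 0%N) // size_avec.
Qed.

Section KroneckerStep.
Variable R : rcfType.

Lemma kron2_lo t (c : 'cV[R]_2) v (i : 'I_(2 ^ t)) (j : 'I_(2 ^ t.+1)) :
  val j = val i -> kron2 c v j 0 = c 0 0 * v i 0.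
Proof.
move=> ji; rewrite /kron2 castmxE !mxE; congr (_ * _); congr (_ _ _).
all: by apply: val_inj; rewrite /= ji ?divn_small ?modn_small ?ltn_ord.
Qed.

Lemma kron2_hi t (c : 'cV[R]_2) v (i : 'I_(2 ^ t)) (j : 'I_(2 ^ t.+1)) :
  val j = (2 ^ t + i)%N -> kron2 c v j 0 = c 1 0 * v i 0.
Proof.
have pos_2t : (0 < 2 ^ t)%N by rewrite expn_gt0.
move=> ji; rewrite /kron2 castmxE !mxE; congr (_ * _); congr (_ _ _).
  by apply: val_inj; rewrite /= ji divnDl ?dvdnn // divnn pos_2t divn_small ?ltn_ord.
by apply: val_inj; rewrite /= ji modnDl modn_small ?ltn_ord.
Qed.

Lemma kron2_Omega_ut n (c : 'cV[R]_2) (v : 'cV[R]_(2 ^ n)) x :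
  ((kron2 c v)^T *m Omega n.+1 x *m ut R n.+1) 0 0 =
  c 0 0 * u1 R 0 0 * (v^T *m Omega n x *m ut R n) 0 0 +
  c 1 0 * u1 R 1 0 * (v^T *m Omega n (fun k => x k.+1) *m ut R n) 0 0.
Proof.
rewrite [ut R n.+1]/= /Omega !diag_mx_formE.
have E : (2 ^ n + 2 ^ n = 2 ^ n.+1)%N by rewrite expnS mul2n addnn.
rewrite (reindex (cast_ord E)); last first.
  by exists (cast_ord (esym E)) => i _; apply: val_inj.
(* generalizing [u1 R] keeps [!mxE] from unfolding it *)
rewrite big_split_ord !big_distrr /=; move: (u1 R) => u.
congr (_ + _); apply: eq_bigr => i _.
- rewrite !(@kron2_lo n _ _ i) // !mxE.
  rewrite (_ : val (cast_ord E (lshift _ i)) = i) // nth_avec_lo //; ring.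
- rewrite !(@kron2_hi n _ _ i) // !mxE.
  rewrite (_ : val (cast_ord E (rshift _ i)) = 2 ^ n + i)%N // nth_avec_hi //; ring.
Qed.

Local Notation s := (Num.sqrt (2 : R))^-1.

Lemma u1E : u1 R 0 0 = s /\ u1 R 1 0 = - s.
Proof. by split; rewrite mxE big_ord_recl big_ord1 !mxE /=; ring. Qed.

Lemma w1E : w1 R 0 0 = s /\ w1 R 1 0 = s.
Proof. by split; rewrite mxE big_ord_recl big_ord1 !mxE /=; ring. Qed.

Lemma invsqrt2_sqr : s * s = 2^-1.
Proof. by rewrite -invfM -expr2 sqr_sqrtr // ler0n. Qed.

End KroneckerStep.

Section BinomialWeights.
Variable R : numFieldType.

Lemma sum_bin_weight_split n (eps : R) (a f : nat -> R) :
  \sum_(j < n.+2) 'C(n.+1, j)%:R *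
     ((n.+1 - j)%:R / n.+1%:R * a j + eps * (j%:R / n.+1%:R * a j.-1)) * f j =
  \sum_(j < n.+1) 'C(n, j)%:R * a j * f j +
  eps * \sum_(j < n.+1) 'C(n, j)%:R * a j * f j.+1.
Proof.
have nz : (n.+1%:R : R) != 0 by rewrite pnatr_eq0.
have binS_down j : 'C(n.+1, j)%:R * (n.+1 - j)%:R / n.+1%:R = 'C(n, j)%:R :> R.
  by rewrite -natrM mulnC -mul_bin_down natrM mulrAC divff // mul1r.
have binS_diag j : 'C(n.+1, j.+1)%:R * j.+1%:R / n.+1%:R = 'C(n, j)%:R :> R.
  by rewrite -natrM mulnC -mul_bin_diag natrM mulrAC divff // mul1r.
rewrite (eq_bigr (fun j : 'I_n.+2 =>
   'C(n.+1, j)%:R * (n.+1 - j)%:R / n.+1%:R * (a j * f j) +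
   eps * ('C(n.+1, j)%:R * j%:R / n.+1%:R * (a j.-1 * f j)))); last first.
  by move=> j _; ring.
rewrite big_split /= -big_distrr /=; congr (_ + _ * _).
- rewrite big_ord_recr /= subnn mulr0 !mul0r addr0.
  by apply: eq_bigr => j _; rewrite binS_down mulrA.
- rewrite big_ord_recl /= mulr0 !mul0r add0r.
  by apply: eq_bigr => j _; rewrite /bump add1n binS_diag mulrA.
Qed.

End BinomialWeights.

Theorem lemma4p3 (R : rcfType) (n : nat) (v : 'cV[R]_(2 ^ n)) (a : nat -> R) :
  (forall x : nat -> R,
     ((v^T *m Omega n x *m ut R n) 0 0 =
      (2 ^+ n)^-1 * \sum_(j < n.+1) 'C(n, j)%:R * a j * x j)) ->
  (forall x : nat -> R,
     ((kron2 (u1 R) v)^T *m Omega n.+1 x *m ut R n.+1) 0 0 =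
      (2 ^+ n.+1)^-1 * \sum_(j < n.+2) 'C(n.+1, j)%:R *
        ((n.+1 - j)%:R / n.+1%:R * a j + j%:R / n.+1%:R * a j.-1) * x j)
  /\
  (forall x : nat -> R,
     ((kron2 (w1 R) v)^T *m Omega n.+1 x *m ut R n.+1) 0 0 =
      (2 ^+ n.+1)^-1 * \sum_(j < n.+2) 'C(n.+1, j)%:R *
        ((n.+1 - j)%:R / n.+1%:R * a j - j%:R / n.+1%:R * a j.-1) * x j).
Proof.
move=> hyp; have [u1_0 u1_1] := u1E R; have [w1_0 w1_1] := w1E R.
have s2 := invsqrt2_sqr R; rewrite exprS invfM.
split=> x.
- under eq_bigr do rewrite -[X in _ + X]mul1r.
  rewrite kron2_Omega_ut !hyp sum_bin_weight_split u1_0 u1_1 mulrNN s2; ring.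
- under eq_bigr do rewrite -[X in _ + X]mulN1r.
  rewrite kron2_Omega_ut !hyp sum_bin_weight_split w1_0 w1_1 u1_0 u1_1 mulrN s2; ring.
Qed.
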